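(* For each $n$, the map sending a UEC-representative $\mathcal{U}$ on vertex set $[n]$ to its DAG-reduction $\mathcal{D}^\mathcal{U}$ is injective; hence it is a bijection between the set of UEC-representatives on $[n]$ and the set of their DAG-reductions.
   Context: A UEC-representative on $[n]$ is an undirected graph equal to the unconditional dependence graph $\mathcal{U}^\mathcal{D}$ of some DAG $\mathcal{D}$ on $[n]$ ($\mathcal{U}^\mathcal{D}$ joins distinct $v,w$ iff there is a trek, i.e. a collider-free path without repeated vertices, between them). $\mathtt{init\_CPDAG}(\mathcal{U})$ is obtained from $\mathcal{U}$ by orienting, for every induced path $v-v'-v''$, its edges as $v\to v'\leftarrow v''$, then removing edges that received both orientations, directing edges that received one, and leaving the rest undirected. For $\mathcal{G}=\mathtt{init\_CPDAG}(\mathcal{U})$ and a vertex $v$, the chain component $\mathrm{cc}_\mathcal{G}(v)$ is the set of vertices joined to $v$ by a path of undirected edges (including $v$). The DAG-reduction $\mathcal{D}^\mathcal{U}$ has as vertices the chain components of $\mathcal{G}$ (subsets of $[n]$) and an edge $\mathbf{v}\to\mathbf{w}$ iff some $v\in\mathbf{v}$, $w\in\mathbf{w}$ satisfy $v\to w$ in $\mathcal{G}$. *)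

From mathcomp Require Import all_boot.
Set Implicit Arguments. Unset Strict Implicit. Unset Printing Implicit Defensive.

Section Defs.
Variable n : nat.
Notation V := 'I_n.

(* An undirected graph on [n] is a set of ordered pairs, (v,w) \in U meaning v - w
   (for UEC-representatives it is automatically symmetric and loopless). *)

Definition dedge (D : {set V * V}) : rel V := fun a b => (a, b) \in D.

Definition is_DAG (D : {set V * V}) : Prop :=
  forall a b, (a, b) \in D -> ~~ connect (dedge D) b a.

Definition adjD (D : {set V * V}) : rel V := fun a b => dedge D a b || dedge D b a.

Definition trek (D : {set V * V}) (v w : V) : Prop :=
  exists p : seq V,
    [/\ path (adjD D) v p, last v p = w, uniq (v :: p) &
        forall i, i.+2 < size (v :: p) ->
          ~~ (dedge D (nth v (v :: p) i) (nth v (v :: p) i.+1) &&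
              dedge D (nth v (v :: p) i.+2) (nth v (v :: p) i.+1))].

Definition is_udg_of (D : {set V * V}) (U : {set V * V}) : Prop :=
  forall v w, (v, w) \in U <-> (v != w /\ trek D v w).

Definition is_UEC_rep (U : {set V * V}) : Prop :=
  exists D : {set V * V}, is_DAG D /\ is_udg_of D U.

(* init_CPDAG: edge a - b receives orientation a -> b iff a - b - c is an
   induced path of U for some c. *)
Definition mark (U : {set V * V}) (a b : V) : bool :=
  [exists c : V, [&& a != b, b != c, a != c, (a, b) \in U, (b, c) \in U
                   & (a, c) \notin U]].

Definition cpdag_dir (U : {set V * V}) (a b : V) : bool :=
  [&& (a, b) \in U, mark U a b & ~~ mark U b a].

Definition cpdag_undir (U : {set V * V}) (a b : V) : bool :=
  [&& (a, b) \in U, ~~ mark U a b & ~~ mark U b a].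

Definition cc (U : {set V * V}) (v : V) : {set V} :=
  [set w | connect (cpdag_undir U) v w].

Definition DAG_reduction (U : {set V * V})
  : {set {set V}} * {set {set V} * {set V}} :=
  ([set cc U v | v : V],
   [set (cc U vw.1, cc U vw.2) | vw in [set vw : V * V | cpdag_dir U vw.1 vw.2]]).

End Defs.

From mathcomp Require Import all_boot.
Set Implicit Arguments. Unset Strict Implicit. Unset Printing Implicit Defensive.

(* In a DAG, v and w are joined by a trek iff they have a common ancestor: a
   collider-free path first runs against the edges and then along them, and
   conversely the directed paths from a lowest common ancestor meet only there.
   Hence in the dependence graph U the closed neighbourhood N[s] of a source s
   is the set of descendants of s, it is a clique, and every edge of U lies in
   such a clique.  In init_CPDAG(U) an edge a - b is directed a -> b iff
   N[a] is a proper subset of N[b] and undirected iff N[a] = N[b], so chain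
   components are the classes of equal closed neighbourhoods and a source of
   the DAG-reduction has a clique as neighbourhood.  Therefore u - w is an edge
   of U iff the components of u and w both equal, or are children of, one
   common source of the DAG-reduction: U is determined by its DAG-reduction. *)

Definition skeleton (T : Type) (e : rel T) : rel T := fun a b => e a b || e b a.

Section AcyclicRelation.
Variables (T : finType) (e : rel T).
Hypothesis e_acyclic : forall a b, e a b -> ~~ connect e b a.

Lemma acyclic_asym a b : e a b -> ~~ e b a.
Proof. by move=> eab; apply: contra (e_acyclic eab); apply: connect1. Qed.

Lemma acyclic_connect_antisym a b : connect e a b -> connect e b a -> a = b.
Proof.
case/connectP=> -[_ -> //|c p] /= /andP[eac cp] ->{b} pa.
by have:= e_acyclic eac; rewrite (connect_trans (path_connect cp (mem_last c p)) pa).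
Qed.

Lemma exists_source_ancestor x : exists2 s, (forall a, ~~ e a s) & connect e s x.
Proof.
pose anc y := #|[set z | connect e z y]|.
have [s sx s_min] := @arg_minnP _ x (connect e ^~ x) anc (connect0 e x).
exists s => // a; apply/negP=> eas.
have anc_as : [set z | connect e z a] \proper [set z | connect e z s].
  apply/properP; split.
    by apply/subsetP=> z; rewrite !inE => /connect_trans; apply; apply: connect1.
  by exists s; rewrite !inE ?connect0 ?e_acyclic.
by move: (s_min a (connect_trans (connect1 eas) sx)); rewrite leqNgt proper_card.
Qed.

Lemma source_connect s a : (forall b, ~~ e b s) -> connect e a s -> a = s.
Proof.
move=> s_src /connectP[p]; case/lastP: p => [_ -> //|p z].
rewrite rcons_path last_rcons => /andP[_ ez] zs.
by move: (s_src (last a p)); rewrite zs ez.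
Qed.

Lemma path_connect_last x p z : path e x p -> z \in x :: p -> connect e z (last x p).
Proof.
move=> xp zp; case/splitPl: zp xp => p1 p2 <-; rewrite cat_path last_cat => /andP[_ p2p].
exact: (path_connect p2p (mem_last _ _)).
Qed.

Fixpoint collider_free (s : seq T) : bool :=
  if s is x :: ((y :: z :: _) as t) then ~~ (e x y && e z y) && collider_free t
  else true.

Lemma collider_freeP x0 s : reflect
  (forall i, i.+2 < size s ->
     ~~ (e (nth x0 s i) (nth x0 s i.+1) && e (nth x0 s i.+2) (nth x0 s i.+1)))
  (collider_free s).
Proof.
elim: s => [|x s IH]; first by constructor.
case: s IH => [|y [|z t]] IH; try by constructor.
apply: (iffP andP) => [[nc /IH cf] [|i] //|cf]; first exact: (cf i).
by split; [exact: (cf 0) | apply/IH => i; exact: (cf i.+1)].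
Qed.

Lemma collider_free_tail x s : collider_free (x :: s) -> collider_free s.
Proof. by case: s => [|y [|z t]] //= /andP[]. Qed.

Lemma collider_free_edge_connect v y t : path (skeleton e) v (y :: t) ->
  collider_free [:: v, y & t] -> e v y -> connect e v (last y t).
Proof.
elim: t v y => [|z t IH] v y /=; first by move=> _ _; apply: connect1.
move=> /and3P[_ yz zt] /andP[nc cf] evy.
have eyz : e y z by case/orP: yz => // ezy; move: nc; rewrite evy ezy.
by apply: connect_trans (connect1 evy) (IH y z _ cf eyz); rewrite /= /skeleton eyz.
Qed.

Lemma collider_free_common_ancestor v p : path (skeleton e) v p ->
  collider_free (v :: p) -> exists2 c, connect e c v & connect e c (last v p).
Proof.
elim: p v => [|y t IH] v; first by move=> _ _; exists v.
case: (boolP (e v y)) => [evy vt cf|nvy /andP[vy yt] cf].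
  by exists v => //; exact: (collider_free_edge_connect vt cf evy).
have eyv : e y v by move: vy; rewrite /skeleton (negbTE nvy).
have [c cy ct] := IH y yt (collider_free_tail cf).
by exists c => //; apply: connect_trans cy (connect1 eyv).
Qed.

Lemma path_collider_free v r : path e v r -> collider_free (v :: r).
Proof.
elim: r v => [|y t IH] v // /andP[evy yt].
case: t IH yt => [|z t] IH yt //.
apply/andP; split; last exact: IH.
apply/negP=> /andP[_ ezy]; case/andP: yt => eyz _.
by have := acyclic_asym eyz; rewrite ezy.
Qed.

Lemma collider_free_fork v r1 r2 : path (fun a b => e b a) v r1 ->
  path e (last v r1) r2 -> collider_free (v :: r1 ++ r2).
Proof.
elim: r1 v => [|y r1 IH] v; first by move=> _; apply: path_collider_free.
move=> /andP[eyv yr1] r2p; have := IH y yr1 r2p.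
rewrite cat_cons; case: (r1 ++ r2) => [|z t] // cf.
apply/andP; split => //; apply/negP=> /andP[evy _].
by have := acyclic_asym eyv; rewrite evy.
Qed.

Lemma exists_lowest_common_ancestor c v w : connect e c v -> connect e c w ->
  exists x, [/\ connect e x v, connect e x w &
    forall z, connect e x z -> connect e z v -> connect e z w -> z = x].
Proof.
move=> cv cw; pose desc x := #|[set z | connect e x z]|.
have cvw : connect e c v && connect e c w by rewrite cv cw.
have [x /andP[xv xw] x_min] :=
  @arg_minnP _ c [pred x | connect e x v && connect e x w] desc cvw.
exists x; split=> // z xz zv zw.
have desc_zx : [set y | connect e z y] \subset [set y | connect e x y].
  by apply/subsetP=> y; rewrite !inE; apply: connect_trans.
have /eqP desc_eq : [set y | connect e z y] == [set y | connect e x y].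
  by rewrite eqEcard desc_zx (x_min z) //= zv zw.
have : x \in [set y | connect e z y] by rewrite desc_eq inE connect0.
by rewrite inE => /acyclic_connect_antisym; apply.
Qed.

Lemma common_ancestor_collider_free c v w : connect e c v -> connect e c w ->
  exists p, [/\ path (skeleton e) v p, last v p = w, uniq (v :: p)
              & collider_free (v :: p)].
Proof.
move=> cv cw; have [x [xv xw lowest]] := exists_lowest_common_ancestor cv cw.
case/connectP: xv => p0 /shortenP[p xp uniq_xp _] v_eq.
case/connectP: xw => q0 /shortenP[q xq uniq_xq _] w_eq.
have rev_xp : rev (x :: p) = v :: rev (belast x p).
  by rewrite [x :: p]lastI rev_rcons -v_eq.
have last_rev : last v (rev (belast x p)) = x.
  by have := last_rcons v (rev p) x; rewrite -rev_cons rev_xp.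
have back : path (fun a b => e b a) v (rev (belast x p)).
  by rewrite v_eq rev_path; exact: xp.
exists (rev (belast x p) ++ q); split.
- rewrite cat_path last_rev; apply/andP; split.
    by apply: sub_path back => a b eba; rewrite /skeleton eba orbT.
  by apply: sub_path xq => a b eab; rewrite /skeleton eab.
- by rewrite last_cat last_rev w_eq.
- rewrite -cat_cons -rev_xp cat_uniq rev_uniq uniq_xp.
  move: uniq_xq; rewrite cons_uniq => /andP[x_notin_q ->]; rewrite andbT.
  apply/hasPn=> z zq; rewrite mem_rev; apply/negP=> zxp.
  have zxq : z \in x :: q by rewrite inE zq orbT.
  have z_eq : z = x.
    apply: lowest; first exact: (path_connect xq zxq).
      by rewrite v_eq; apply: path_connect_last zxp.
    by rewrite w_eq; apply: path_connect_last zxq.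
  by move: x_notin_q; rewrite -z_eq zq.
- by apply: collider_free_fork back _; rewrite last_rev.
Qed.
End AcyclicRelation.

Lemma trekP n (D : {set 'I_n * 'I_n}) v w : is_DAG D ->
  trek D v w <-> exists2 c, connect (dedge D) c v & connect (dedge D) c w.
Proof.
move=> D_acyclic; split=> [[p [vp <- _ /(collider_freeP _ v) cf]]|[c cv cw]].
  exact: collider_free_common_ancestor.
have [p [vp <- uniq_p /(collider_freeP _ v) cf]] :=
  common_ancestor_collider_free D_acyclic cv cw.
by exists p.
Qed.

Definition nbhd (T : finType) (U : {set T * T}) (x : T) : {set T} :=
  [set y | (y == x) || ((x, y) \in U)].

Definition clique (T : finType) (U : {set T * T}) (S : {set T}) : Prop :=
  {in S &, forall a b, b \in nbhd U a}.

Lemma nbhd_refl (T : finType) (U : {set T * T}) x : x \in nbhd U x.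
Proof. by rewrite inE eqxx. Qed.

Lemma mem_nbhd_neq (T : finType) (U : {set T * T}) a b :
  a != b -> (b \in nbhd U a) = ((a, b) \in U).
Proof. by move=> neq_ab; rewrite inE eq_sym (negbTE neq_ab). Qed.

Section DependenceGraph.
Variables (n : nat) (D U : {set 'I_n * 'I_n}).
Hypotheses (D_acyclic : is_DAG D) (U_udg : is_udg_of D U).

Lemma udg_nbhdP x y :
  y \in nbhd U x <-> exists2 c, connect (dedge D) c x & connect (dedge D) c y.
Proof.
rewrite inE; case: eqVneq => [->|neq_yx] /=; first by split=> // _; exists x.
split=> [/U_udg[_ /(trekP _ _ D_acyclic)] //|anc].
by apply/U_udg; split; [rewrite eq_sym | apply/(trekP _ _ D_acyclic)].
Qed.

Lemma udg_sym a b : (a, b) \in U -> (b, a) \in U.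
Proof.
case/U_udg=> neq_ab /(trekP _ _ D_acyclic)[c ca cb].
by apply/U_udg; split; [rewrite eq_sym | apply/(trekP _ _ D_acyclic); exists c].
Qed.

Lemma udg_irrefl a : (a, a) \notin U.
Proof. by apply/negP=> /U_udg[/eqP]. Qed.

Lemma nbhd_source s : (forall a, ~~ dedge D a s) ->
  nbhd U s = [set y | connect (dedge D) s y].
Proof.
move=> s_src; apply/setP=> y; rewrite [in RHS]inE.
apply/idP/idP => [/udg_nbhdP[c cs cy]|sy]; last by apply/udg_nbhdP; exists s.
by rewrite -(source_connect s_src cs).
Qed.

Lemma udg_clique_cover u w : w \in nbhd U u ->
  exists s, [/\ clique U (nbhd U s), u \in nbhd U s & w \in nbhd U s].
Proof.
case/udg_nbhdP=> c cu cw; have [s s_src sc] := exists_source_ancestor D_acyclic c.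
exists s; rewrite nbhd_source // !inE (connect_trans sc cu) (connect_trans sc cw).
by split=> // a b sa sb; apply/udg_nbhdP; exists s; move: sa sb; rewrite !inE.
Qed.
End DependenceGraph.

Lemma UEC_rep_structure n (U : {set 'I_n * 'I_n}) : is_UEC_rep U ->
  [/\ forall a b, (a, b) \in U -> (b, a) \in U, forall a, (a, a) \notin U
    & forall u w, w \in nbhd U u ->
        exists s, [/\ clique U (nbhd U s), u \in nbhd U s & w \in nbhd U s]].
Proof.
case=> D [D_acyclic U_udg].
by split; [exact: udg_sym D_acyclic U_udg | exact: udg_irrefl U_udg
          | exact: udg_clique_cover D_acyclic U_udg].
Qed.

Definition child_or_self (T : finType) (E : {set {set T} * {set T}})
    (C A : {set T}) : bool :=
  (A == C) || ((C, A) \in E).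

Definition under_common_source (T : finType)
    (R : {set {set T}} * {set {set T} * {set T}}) (A B : {set T}) : Prop :=
  exists C, [/\ C \in R.1, forall X, (X, C) \notin R.2,
                child_or_self R.2 C A & child_or_self R.2 C B].

Section ReductionDeterminesGraph.
Variables (n : nat) (U : {set 'I_n * 'I_n}).
Hypotheses (U_sym : forall a b, (a, b) \in U -> (b, a) \in U)
           (U_irrefl : forall a, (a, a) \notin U)
           (U_cover : forall u w, w \in nbhd U u ->
              exists s, [/\ clique U (nbhd U s), u \in nbhd U s & w \in nbhd U s]).

Lemma nbhd_sym a b : b \in nbhd U a -> a \in nbhd U b.
Proof. by rewrite !inE => /orP[/eqP->|/U_sym->]; rewrite ?eqxx ?orbT. Qed.

Lemma mark_nbhd a b : (a, b) \in U -> mark U a b = ~~ (nbhd U b \subset nbhd U a).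
Proof.
move=> ab; have neq_ab : a != b by apply: contraTneq ab => ->; apply: U_irrefl.
apply/existsP/subsetPn => [[c /and5P[_ neq_bc neq_ac _ /andP[bc ac]]]|[c cb ca]].
  by exists c; rewrite inE; [rewrite bc orbT | rewrite negb_or eq_sym neq_ac ac].
move: ca; rewrite inE negb_or => /andP[neq_ca ac].
have bc : (b, c) \in U.
  by move: cb; rewrite inE => /orP[/eqP c_b|//]; rewrite c_b ab in ac.
have neq_bc : b != c by apply: contraTneq bc => <-; apply: U_irrefl.
by exists c; rewrite neq_ab neq_bc eq_sym neq_ca ab bc ac.
Qed.

Lemma cpdag_undirE a b :
  cpdag_undir U a b = ((a, b) \in U) && (nbhd U a == nbhd U b).
Proof.
rewrite /cpdag_undir; case ab: ((a, b) \in U) => //=.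
by rewrite (mark_nbhd ab) (mark_nbhd (U_sym ab)) !negbK eqEsubset andbC.
Qed.

Lemma cpdag_dirE a b :
  cpdag_dir U a b = ((a, b) \in U) && (nbhd U a \proper nbhd U b).
Proof.
rewrite /cpdag_dir properE; case ab: ((a, b) \in U) => //=.
by rewrite (mark_nbhd ab) (mark_nbhd (U_sym ab)) negbK andbC.
Qed.

Lemma mem_cc v w : (w \in cc U v) = (nbhd U v == nbhd U w).
Proof.
rewrite inE; apply/idP/eqP => [/connectP[p vp ->]|eq_vw].
  elim: p v vp => //= y p IH v /andP[vy yp].
  by rewrite -(IH y yp); move: vy; rewrite cpdag_undirE => /andP[_ /eqP].
case: (eqVneq v w) => [-> //|neq_vw]; apply: connect1.
by rewrite cpdag_undirE eq_vw eqxx andbT -mem_nbhd_neq // eq_vw nbhd_refl.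
Qed.

Lemma eq_cc a b : cc U a = cc U b <-> nbhd U a = nbhd U b.
Proof.
split=> [cc_ab|nbhd_ab]; last by apply/setP=> z; rewrite !mem_cc nbhd_ab.
by apply/eqP; rewrite -mem_cc cc_ab mem_cc.
Qed.

Lemma reduction_block X u : X \in (DAG_reduction U).1 -> u \in X -> X = cc U u.
Proof. by case/imsetP=> v _ ->; rewrite mem_cc => /eqP/eq_cc. Qed.

Lemma reduction_edge a b :
  cpdag_dir U a b -> (cc U a, cc U b) \in (DAG_reduction U).2.
Proof. by move=> ab; apply/imsetP; exists (a, b); rewrite ?inE. Qed.

Lemma reduction_edge_inv X Y : (X, Y) \in (DAG_reduction U).2 ->
  exists a b, [/\ X = cc U a, Y = cc U b & cpdag_dir U a b].
Proof. by case/imsetP=> -[a b]; rewrite inE => ab [-> ->]; exists a, b. Qed.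

Lemma clique_nbhd_child s u : clique U (nbhd U s) -> u \in nbhd U s ->
  child_or_self (DAG_reduction U).2 (cc U s) (cc U u).
Proof.
move=> s_clique su.
have sub : nbhd U s \subset nbhd U u by apply/subsetP=> b; apply: s_clique.
case: (boolP (nbhd U u \subset nbhd U s)) => us.
  by apply/orP; left; apply/eqP/eq_cc/eqP; rewrite eqEsubset us sub.
have neq_su : s != u by apply: contraNneq us => ->; apply: subxx.
apply/orP; right; apply: reduction_edge.
by rewrite cpdag_dirE -mem_nbhd_neq // su properE sub us.
Qed.

Lemma source_nbhd_clique v :
  (forall X, (X, cc U v) \notin (DAG_reduction U).2) -> clique U (nbhd U v).
Proof.
move=> v_src; have [s [s_clique vs _]] := U_cover (nbhd_refl U v).
case/orP: (clique_nbhd_child s_clique vs) => [/eqP/eq_cc -> //|].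
by rewrite (negbTE (v_src _)).
Qed.

Lemma reduction_child_nbhd v u :
  child_or_self (DAG_reduction U).2 (cc U v) (cc U u) -> u \in nbhd U v.
Proof.
case/orP=> [/eqP/eq_cc <-|]; first exact: nbhd_refl.
case/reduction_edge_inv=> a [b [/eq_cc va /eq_cc ub]]; rewrite cpdag_dirE => /andP[ab _].
rewrite va; apply: nbhd_sym; rewrite ub; apply: nbhd_sym.
by rewrite inE ab orbT.
Qed.

Lemma udg_edge_reduction u w : u != w ->
  (u, w) \in U <-> under_common_source (DAG_reduction U) (cc U u) (cc U w).
Proof.
move=> neq_uw; split=> [uw|[C [/imsetP[v _ ->] v_src vu vw]]]; last first.
  by rewrite -mem_nbhd_neq //; apply: (source_nbhd_clique v_src);
    exact: reduction_child_nbhd.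
have w_nbhd : w \in nbhd U u by rewrite mem_nbhd_neq.
have [s [s_clique us ws]] := U_cover w_nbhd.
exists (cc U s); split; [exact: imset_f | | exact: clique_nbhd_child ..].
move=> X; apply/negP=> /reduction_edge_inv[a [b [_ /eq_cc sb]]].
rewrite cpdag_dirE properE -sb => /and3P[ab _ /negP]; apply.
apply/subsetP=> y sy; apply: s_clique => //.
by rewrite sb; apply: nbhd_sym; rewrite inE ab orbT.
Qed.
End ReductionDeterminesGraph.

Theorem lemma5p6 (n : nat) (U1 U2 : {set 'I_n * 'I_n}) :
  is_UEC_rep U1 -> is_UEC_rep U2 ->
  DAG_reduction U1 = DAG_reduction U2 -> U1 = U2.
Proof.
move=> /UEC_rep_structure[sym1 irr1 cov1] /UEC_rep_structure[sym2 irr2 cov2] eqR.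
have cc12 u : cc U1 u = cc U2 u.
  apply: (reduction_block sym2 irr2); first by rewrite -eqR imset_f.
  by rewrite (mem_cc sym1 irr1).
have char1 := udg_edge_reduction sym1 irr1 cov1.
have char2 := udg_edge_reduction sym2 irr2 cov2.
apply/setP=> -[u w]; case: (eqVneq u w) => [<-|neq_uw].
  by rewrite (negbTE (irr1 u)) (negbTE (irr2 u)).
apply/idP/idP.
  by move/(char1 _ _ neq_uw); rewrite eqR !cc12 => /(char2 _ _ neq_uw).
by move/(char2 _ _ neq_uw); rewrite -eqR -!cc12 => /(char1 _ _ neq_uw).
Qed.
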